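(* Let $N\geq1$ be an integer and let $f\in L^2(\mathbb{T})$ be supported on an interval $I\subset\mathbb{T}$. Then $$\|\mathbb{E}^*_Nf\|_{L^2}\leq\Big(|I|+\frac{2}{N}\Big)^{1/2}\|f\|_{L^2}.$$
   Context: $\mathbb{T}$ is identified with $[0,1)$, with addition modulo $1$ and Lebesgue measure. For $x_0\in\mathbb{T}$ set $\tau_{x_0}f(x)=f(x-x_0)$, and set $\mathbb{E}^*_N=\frac1N\sum_{j=0}^{N-1}\tau_{j/N}$. *)

From HB Require Import structures.
From mathcomp Require Import all_boot all_order all_algebra.
From mathcomp Require Import all_classical all_reals all_analysis.
Set Implicit Arguments. Unset Strict Implicit. Unset Printing Implicit Defensive.
Import Order.TTheory GRing.Theory Num.Theory.
Local Open Scope classical_set_scope.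
Local Open Scope ring_scope.

(* The torus T is modelled as the set [0,1) of reals, with addition mod 1. *)
Definition frac {R : realType} (x : R) : R := x - (Num.floor x)%:~R.

Definition torus {R : realType} : set R := `[0, 1[%classic.

Definition tau {R : realType} (x0 : R) (f : R -> R) : R -> R :=
  fun x => f (frac (x - x0)).

Definition Estar {R : realType} (N : nat) (f : R -> R) : R -> R :=
  fun x => N%:R^-1 * \sum_(j < N) tau (j%:R / N%:R) f x.

(* A closed torus_arc of T starting at a with length l >= 0: { a + t mod 1 : t in [0,l] }.
   (Arcs may wrap around 0; for l >= 1 it is the whole torus.) *)
Definition torus_arc {R : realType} (a l : R) : set R :=
  [set x | torus x /\ frac (x - a) <= l].

(* A complex-valued function f = u + i v is represented by its real and
   imaginary parts.  Squared L^2 norm on T (extended real): *)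
Definition L2sq {R : realType} (u v : R -> R) : \bar R :=
  (\int[lebesgue_measure]_(x in torus) ((u x) ^+ 2 + (v x) ^+ 2)%:E)%E.

Definition L2norm {R : realType} (u v : R -> R) : \bar R := sqrte (L2sq u v).

From Pilot Require Import Defs.
From mathcomp Require Import all_boot all_order all_algebra.
From mathcomp Require Import all_classical all_reals all_analysis.
From mathcomp Require Import measurable_realfun ring lra zify.
Import Order.TTheory GRing.Theory Num.Theory.
Local Open Scope classical_set_scope.
Local Open Scope ring_scope.

Local Notation frac := Defs.frac.

(* E*_N f (x) is the average of f over the N points x - j/N of a rotated grid.  If f
   vanishes off an arc I of length l, at most N min(l, 1) + 1 of these points lie in I
   (after rescaling by N they fall into distinct unit cells), so the Cauchy-Schwarz
   inequality restricted to them gives |E*_N f (x)|^2 <= (|I| + 1/N) E*_N |f|^2 (x).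
   Rotations preserve the integral over T, hence so does E*_N, and integrating the
   pointwise bound gives ||E*_N f||^2 <= (|I| + 1/N) ||f||^2. *)

Section Frac.
Context {R : realType}.
Implicit Types (x y c : R).

Lemma frac_id y : 0 <= y < 1 -> frac y = y.
Proof. by move=> y01; rewrite /frac (@floor_def _ y 0) ?subr0. Qed.

Lemma frac_neg y : -1 <= y < 0 -> frac y = y + 1.
Proof.
by move=> y10; rewrite /frac (@floor_def _ y (-1)) ?mulrN1z ?opprK // addNr mulrN1z.
Qed.

Lemma frac_itv y : 0 <= frac y < 1.
Proof.
have := floor_itv y; rewrite /frac intrD => /andP[h1 h2].
by rewrite subr_ge0 h1 /= ltrBlDl.
Qed.

Lemma torus_frac y : torus (frac y).
Proof. by rewrite /torus /= in_itv /= frac_itv. Qed.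

Lemma fracDz y (k : int) : frac (y + k%:~R) = frac y.
Proof. by rewrite /frac floorDrz ?intr_int // intrKfloor intrD; ring. Qed.

Lemma frac_fracB y c : frac (frac y - c) = frac (y - c).
Proof. by rewrite /frac -intrN -[RHS](fracDz _ (- Num.floor y)); congr frac; ring. Qed.

Lemma fracB_frac y c : frac (y - frac c) = frac (y - c).
Proof. by rewrite /frac -[RHS](fracDz _ (Num.floor c)); congr frac; ring. Qed.

End Frac.

Section Rotation.
Context {R : realType}.
Implicit Types (c s : R) (g : R -> R).

Lemma measurable_torus : measurable (torus : set R).
Proof. exact: measurable_itv. Qed.

Let measurable_addr s :
  @measurable_fun _ _ (measurableTypeR R) (measurableTypeR R) setT (fun x => x + s).
Proof. exact: measurable_funD. Qed.

Lemma lebesgue_measure_addr_preimage s (A : set R) : measurable A ->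
  lebesgue_measure ((fun x => x + s) @^-1` A) = lebesgue_measure A.
Proof.
move=> mA.
rewrite (@lebesgue_measure_unique R
  (measure_function_pushforward__canonical__measure_function_Measure
     lebesgue_measure (measurable_addr s)) _ _ mA) //.
move=> _ [[x y] _ <-] /=; rewrite /pushforward.
have -> : (fun z => z + s) @^-1` `]x, y] = `]x - s, y - s]%classic.
  by apply/seteqP; split => z /=; rewrite !in_itv /= ltrBlDr lerBrDr.
rewrite !lebesgue_measure_itv /= !lte_fin ltrD2r.
by case: ifP => // _; rewrite -!EFinD; congr EFin; ring.
Qed.

Lemma ge0_integral_addr s (D : set R) (f : R -> \bar R) : measurable D ->
  measurable_fun D f -> (forall x, D x -> (0 <= f x)%E) ->
  (\int[lebesgue_measure]_(x in (fun y => y + s)%R @^-1` D) f (x + s)%R =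
   \int[lebesgue_measure]_(x in D) f x)%E.
Proof.
move=> mD mf f0.
rewrite -(ge0_integral_pushforward (measurable_addr s)) //; last first.
  by move=> x; rewrite inE; exact: f0.
apply: eq_measure_integral => A mA _ /=.
by rewrite /pushforward lebesgue_measure_addr_preimage.
Qed.

Lemma torus_splitU c : 0 <= c <= 1 -> torus = `[0, c[ `|` `[c, 1[.
Proof.
move=> c01; apply/seteqP; split => x /=; rewrite /torus /= !in_itv /=.
  by move=> /andP[x0 x1]; have [xc|xc] := ltP x c; [left|right]; apply/andP.
by move=> [] /andP[? ?]; apply/andP; split; lra.
Qed.

Lemma torus_split_disjoint c : [disjoint `[0, c[ & `[c, 1[]%classic.
Proof. by apply/disj_setPS => x /=; rewrite !in_itv /= => -[/andP[_ ?] /andP[? _]]; lra. Qed.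

Lemma tau_frac c g : tau (frac c) g = tau c g.
Proof. by apply/funext => x; rewrite /tau fracB_frac. Qed.

Lemma tau_lt c g x : 0 <= x < c -> c < 1 -> tau c g x = g (x + (1 - c)).
Proof.
move=> /andP[x0 xc] c1; rewrite /tau frac_neg; last by apply/andP; split; lra.
by congr g; ring.
Qed.

Lemma tau_ge c g x : 0 <= c -> c <= x < 1 -> tau c g x = g (x - c).
Proof. by move=> c0 /andP[cx x1]; rewrite /tau frac_id //; apply/andP; split; lra. Qed.

Lemma measurable_fun_tau c g : measurable_fun torus g -> measurable_fun torus (tau c g).
Proof.
move=> mg; rewrite -tau_frac; have /andP[c0 c1] := frac_itv c.
move: (frac c) c0 c1 => {}c c0 c1.
rewrite (torus_splitU c) ?c0 ?ltW //; apply/measurable_funU => //; split.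
- apply: (eq_measurable_fun (g \o (fun x => x + (1 - c)))).
    by move=> x; rewrite in_setE /= in_itv /= => xc; rewrite tau_lt.
  apply: (measurable_comp measurable_torus) => //; last first.
    exact: measurable_funTS (measurable_addr _).
  move=> _ [x xI <-]; move: xI; rewrite /= in_itv /= => /andP[? ?].
  by rewrite /torus /= in_itv /=; apply/andP; split; lra.
- apply: (eq_measurable_fun (g \o (fun x => x + - c))).
    by move=> x; rewrite in_setE /= in_itv /= => xc; rewrite tau_ge.
  apply: (measurable_comp measurable_torus) => //; last first.
    exact: measurable_funTS (measurable_addr _).
  move=> _ [x xI <-]; move: xI; rewrite /= in_itv /= => /andP[? ?].
  by rewrite /torus /= in_itv /=; apply/andP; split; lra.
Qed.

Lemma itv_sub_torus (a b : R) : 0 <= a -> b <= 1 -> `[a, b[ `<=` torus.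
Proof. by move=> a0 b1 x; rewrite /torus /= !in_itv /= => /andP[? ?]; apply/andP; split; lra. Qed.

Lemma addr_preimage_itv (a b s : R) :
  (fun x => x + s) @^-1` `[a, b[ = `[a - s, b - s[%classic.
Proof. by apply/seteqP; split => x /=; rewrite !in_itv /= lerBlDr ltrBrDr. Qed.

Lemma ge0_integral_torus_split c (f : R -> \bar R) : 0 <= c <= 1 ->
  measurable_fun torus f -> (forall x, torus x -> (0 <= f x)%E) ->
  (\int[lebesgue_measure]_(x in torus) f x =
   \int[lebesgue_measure]_(x in `[0%R, c[) f x +
   \int[lebesgue_measure]_(x in `[c, 1%R[) f x)%E.
Proof.
move=> c01; rewrite (torus_splitU _ c01) => mf f0.
exact/ge0_integral_setU/torus_split_disjoint.
Qed.

Lemma ge0_integral_tau c g : measurable_fun torus g -> (forall x, torus x -> 0 <= g x) ->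
  (\int[lebesgue_measure]_(x in torus) (tau c g x)%:E =
   \int[lebesgue_measure]_(x in torus) (g x)%:E)%E.
Proof.
move=> mg g0; rewrite -tau_frac; have /andP[c0 c1] := frac_itv c.
move: (frac c) c0 c1 => {}c c0 c1.
have mgE : measurable_fun torus (fun x => (g x)%:E) by apply/measurable_EFinP.
have g0E x : torus x -> (0 <= (g x)%:E)%E by move=> /g0; rewrite lee_fin.
rewrite (ge0_integral_torus_split c) ?c0 ?ltW //; first last.
- by move=> x _; rewrite lee_fin; apply: g0; exact: torus_frac.
- by apply/measurable_EFinP; exact: measurable_fun_tau.
rewrite [RHS](ge0_integral_torus_split (1 - c)) //; last by apply/andP; split; lra.
rewrite addeC; congr (_ + _)%E.
- have sub : `[0, 1 - c[ `<=` torus by apply: itv_sub_torus; lra.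
  rewrite -(ge0_integral_addr (- c) `[0, 1 - c[%classic); first last.
  + by move=> x xD; apply: g0E; exact: sub.
  + exact: measurable_funS measurable_torus sub mgE.
  + exact: measurable_itv.
  rewrite addr_preimage_itv sub0r opprK subrK.
  by apply: eq_integral => x; rewrite in_setE /= in_itv /= => xc; rewrite tau_ge.
- have sub : `[1 - c, 1[ `<=` torus by apply: itv_sub_torus; lra.
  rewrite -(ge0_integral_addr (1 - c) `[1 - c, 1[%classic); first last.
  + by move=> x xD; apply: g0E; exact: sub.
  + exact: measurable_funS measurable_torus sub mgE.
  + exact: measurable_itv.
  rewrite addr_preimage_itv subrr subKr.
  by apply: eq_integral => x; rewrite in_setE /= in_itv /= => xc; rewrite tau_lt.
Qed.

End Rotation.

Section Arc.
Context {R : realType}.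
Implicit Types (a l : R).

Lemma torus_arcE a l : torus_arc a l = torus `&` tau a idfun @^-1` `]-oo, l].
Proof. by apply/seteqP; split => x /=; rewrite in_itv. Qed.

Lemma measurable_torus_arc a l : measurable (torus_arc a l).
Proof.
rewrite torus_arcE.
apply: (measurable_fun_tau a idfun (@measurable_id _ _ torus)).
- exact: measurable_torus.
- exact: measurable_itv.
Qed.

Lemma lebesgue_measure_torus_arc a l : 0 <= l ->
  lebesgue_measure (torus_arc a l) = (Num.min l 1)%:E.
Proof.
move=> l0; set B := `]-oo, l]%classic.
have mB : measurable B by exact: measurable_itv.
transitivity (\int[lebesgue_measure]_(x in torus) (tau a \1_B x)%:E)%E.
  have arcT : torus_arc a l `<=` torus by move=> x [].
  rewrite -(setIidl arcT) -integral_indic; first last.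
  - exact: measurable_torus_arc.
  - exact: measurable_torus.
  apply: eq_integral => x; rewrite in_setE => tx.
  by rewrite /tau !indicE torus_arcE in_setI (mem_set tx).
rewrite ge0_integral_tau; last 2 first.
- exact: measurable_indic.
- by move=> x _; rewrite indicE.
rewrite integral_indic //; last exact: measurable_torus.
have [l1|l1] := ltP l 1.
- have -> : B `&` torus = `[0, l]%classic.
    apply/seteqP; split => x; rewrite /B /torus /= !in_itv /=.
      by move=> [xl /andP[x0 x1]]; apply/andP.
    by move=> /andP[x0 xl]; split; [|apply/andP; split]; lra.
  apply: eq_trans (lebesgue_measure_itv `[0, l]) _; rewrite /= lte_fin.
  by case: ltP => [_|l0']; rewrite ?oppr0 ?adde0 //; congr EFin; lra.
- rewrite setIidr; last by move=> x; rewrite /B /torus /= !in_itv /= => /andP[_ x1]; lra.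
  by apply: eq_trans (lebesgue_measure_itv `[0, 1[) _; rewrite /= lte01 oppr0 adde0.
Qed.

End Arc.

Section Counting.
Context {R : realType}.

Lemma weighted_cauchy_schwarz (I : finType) (c w : I -> R) : (forall i, 0 <= c i) ->
  (\sum_i c i * w i) ^+ 2 <= (\sum_i c i) * \sum_i c i * w i ^+ 2.
Proof.
move=> c0; set C := \sum_i c i; set S := \sum_i c i * w i; set Q := \sum_i c i * w i ^+ 2.
have C0 : 0 <= C by exact: sumr_ge0.
have var_ge0 : 0 <= C * (C * Q - S ^+ 2).
  have -> : C * (C * Q - S ^+ 2) = \sum_i c i * (C * w i - S) ^+ 2.
    rewrite (eq_bigr (fun i =>
      C ^+ 2 * (c i * w i ^+ 2) - 2 * C * S * (c i * w i) + S ^+ 2 * c i)); last first.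
      by move=> i _; ring.
    by rewrite big_split sumrB /= -!mulr_sumr -/C -/S -/Q; ring.
  by apply: sumr_ge0 => i _; rewrite mulr_ge0 // sqr_ge0.
have [C_eq0|C_gt0] := eqVneq C 0; last first.
  by rewrite -subr_ge0; move: var_ge0; rewrite pmulr_rge0 // lt_def C_gt0.
have c_eq0 i : c i = 0 by apply: (psumr_eq0P (P := xpredT)) => // ? _; exact: c0.
by rewrite /S big1 ?expr0n ?C_eq0 ?mul0r // => i _; rewrite c_eq0 mul0r.
Qed.

Lemma sum_le_nat_le n (z : R) : 0 <= z ->
  \sum_(k < n) ((k%:R <= z)%R%:R : R) <= Num.min n%:R (z + 1).
Proof.
move=> z0; rewrite le_min; elim: n => [|n]; first by rewrite big_ord0 ler0n; lra.
rewrite big_ord_recr /= -addn1 natrD => /andP[IH1 IH2].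
by case: (leP n%:R z) => nz /=; apply/andP; split; lra.
Qed.

Lemma floor_mul_frac_grid (N j : nat) (y : R) : (0 < N)%N ->
  Num.floor (N%:R * frac (y - j%:R / N%:R)) =
  Num.floor (N%:R * y) - j%:Z - N%:Z * Num.floor (y - j%:R / N%:R).
Proof.
move=> N0; have N_neq0 : N%:R != 0 :> R by rewrite pnatr_eq0 -lt0n.
set e := Num.floor (y - _).
have -> : N%:R * frac (y - j%:R / N%:R) = N%:R * y + (- j%:Z - N%:Z * e)%:~R.
  by rewrite /frac intrB rmorphM /= -!pmulrn; field.
by rewrite floorDrz ?intr_int // intrKfloor addrA.
Qed.

Lemma floor_mul_frac_grid_inj (N : nat) (y : R) : (0 < N)%N ->
  injective (fun j : 'I_N => Num.floor (N%:R * frac (y - j%:R / N%:R))).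
Proof.
move=> N0 j k /=; rewrite !floor_mul_frac_grid //.
move: (Num.floor (N%:R * y)) (Num.floor (y - j%:R / N%:R)) (Num.floor (y - k%:R / N%:R)).
move=> m ej ek jk; have jN := ltn_ord j; have kN := ltn_ord k.
have : N%:Z * (ek - ej) = j%:Z - k%:Z by rewrite mulrBr; lia.
move: (ek - ej) => d Nd; apply: val_inj => /=.
have [d_gt0|d_lt0|d0] := ltrgt0P d; last by rewrite d0 mulr0 in Nd; lia.
- have : N%:Z * 1 <= N%:Z * d by rewrite ler_pM2l ?ltz_nat.
  lia.
- have : N%:Z * d <= N%:Z * -1 by rewrite ler_pM2l ?ltz_nat.
  lia.
Qed.

Lemma sum_frac_grid_le (N : nat) (y l : R) : (0 < N)%N -> 0 <= l ->
  \sum_(j < N) ((frac (y - j%:R / N%:R) <= l)%R%:R : R) <= N%:R * Num.min l 1 + 1.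
Proof.
move=> N0 l0; have N_gt0 : (0 : R) < N%:R by rewrite ltr0n.
pose p (j : 'I_N) := N%:R * frac (y - j%:R / N%:R).
have [p_ge0 p_ltN] : (forall j, 0 <= p j) /\ (forall j, p j < N%:R).
  by split => j; have /andP[? ?] := frac_itv (y - j%:R / N%:R);
    rewrite /p ?mulr_ge0 // -[ltRHS]mulr1 ltr_pM2l.
have h_ltN j : (Num.truncn (p j) < N)%N by rewrite truncn_lt_nat.
pose h j := Ordinal (h_ltN j).
have h_inj : injective h.
  move=> j k /(congr1 val) /=; rewrite !truncn_floor !p_ge0 => /eqP.
  rewrite -eqz_nat !gez0_abs ?floor_ge0 // => /eqP.
  exact: floor_mul_frac_grid_inj.
apply: (@le_trans _ _ (\sum_(j < N) (((h j)%:R <= N%:R * l)%R%:R : R))).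
  apply: ler_sum => j _; have [pl|] := leP (frac (y - j%:R / N%:R)) l; last by [].
  suff -> : (h j)%:R <= N%:R * l by [].
  by apply: le_trans (_ : p j <= _); rewrite ?truncn_le ?p_ge0 // ler_pM2l.
have -> : \sum_(j < N) (((h j)%:R <= N%:R * l)%R%:R : R) =
          \sum_(k < N) ((k%:R <= N%:R * l)%R%:R : R) by rewrite [RHS](reindex_inj h_inj).
apply: le_trans (sum_le_nat_le _ _ (mulr_ge0 (ltW N_gt0) l0)) _.
have [l1|l1] := leP l 1; first by rewrite ge_min lexx orbT.
by rewrite ge_min mulr1 lerDl ler01.
Qed.

End Counting.

Section Estar.
Context {R : realType}.
Context {N : nat}.
Hypothesis N_gt0 : (0 < N)%N.
Implicit Types (f g : R -> R).

Lemma measurable_fun_Estar f : measurable_fun torus f -> measurable_fun torus (Estar N f).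
Proof.
move=> mf; apply: measurable_funM => //; apply: measurable_sum => j.
exact: measurable_fun_tau.
Qed.

Lemma EstarD f g x : Estar N (fun y => f y + g y) x = Estar N f x + Estar N g x.
Proof. by rewrite /Estar /tau big_split mulrDr. Qed.

Lemma Estar_ge0 f x : (forall y, torus y -> 0 <= f y) -> 0 <= Estar N f x.
Proof.
move=> f0; rewrite mulr_ge0 ?invr_ge0 ?ler0n // sumr_ge0 // => j _.
exact/f0/torus_frac.
Qed.

Lemma ge0_integral_Estar f : measurable_fun torus f -> (forall x, torus x -> 0 <= f x) ->
  (\int[lebesgue_measure]_(x in torus) (Estar N f x)%:E =
   \int[lebesgue_measure]_(x in torus) (f x)%:E)%E.
Proof.
move=> mf f0; have tau_ge0 (j : 'I_N) x : torus x -> (0 <= (tau (j%:R / N%:R) f x)%:E)%E.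
  by move=> _; rewrite lee_fin; exact/f0/torus_frac.
have mtau (j : 'I_N) : measurable_fun torus (fun x => (tau (j%:R / N%:R) f x)%:E).
  by apply/measurable_EFinP; exact: measurable_fun_tau.
under eq_integral => x _ do rewrite /Estar EFinM -sumEFin.
rewrite ge0_integralZl ?lee_fin ?invr_ge0 ?ler0n //; first last.
- by move=> x tx; rewrite sume_ge0 // => j _; exact: tau_ge0.
- exact: emeasurable_sum.
- exact: measurable_itv.
rewrite ge0_integral_sum //; last exact: measurable_itv.
under eq_bigr => j _ do rewrite ge0_integral_tau //.
rewrite sumr_const card_ord -[X in (_ * X)%E]mule_natl muleA -EFinM mulVf ?mul1e //.
by rewrite pnatr_eq0 -lt0n.
Qed.

Lemma sqr_Estar_le (a l : R) f x : 0 <= l ->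
  (forall y, torus y -> ~ torus_arc a l y -> f y = 0) ->
  Estar N f x ^+ 2 <= (Num.min l 1 + N%:R^-1) * Estar N (fun y => f y ^+ 2) x.
Proof.
move=> l0 f_supp.
pose b (j : 'I_N) : R := (frac (x - a - j%:R / N%:R) <= l)%R%:R.
pose w (j : 'I_N) := tau (j%:R / N%:R) f x.
have bw j : b j * w j = w j.
  rewrite /b; case: leP => bj; first by rewrite mul1r.
  rewrite mul0r /w /tau f_supp //; first exact: torus_frac.
  by move=> [_]; rewrite frac_fracB addrAC leNgt bj.
have -> : Estar N f x = N%:R^-1 * \sum_j b j * w j by under eq_bigr do rewrite bw.
have -> : Estar N (fun y => f y ^+ 2) x = N%:R^-1 * \sum_j b j * w j ^+ 2.
  by under eq_bigr do rewrite mulrA bw.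
have N_neq0 : N%:R != 0 :> R by rewrite pnatr_eq0 -lt0n.
have sq_ge0 : 0 <= \sum_j b j * w j ^+ 2 by apply: sumr_ge0 => j _; rewrite mulr_ge0 ?sqr_ge0.
rewrite [leRHS](_ : _ = N%:R^-1 ^+ 2 * ((N%:R * Num.min l 1 + 1) * \sum_j b j * w j ^+ 2));
  last by field.
rewrite exprMn ler_pM2l ?exprn_gt0 ?invr_gt0 ?ltr0n //.
have b_ge0 j : 0 <= b j by exact: ler0n.
apply: le_trans (weighted_cauchy_schwarz _ b w b_ge0) _.
by rewrite ler_wpM2r // sum_frac_grid_le.
Qed.

End Estar.

Theorem lemma2p6 (R : realType) (N : nat) (u v : R -> R) (a l : R) :
  (1 <= N)%N ->
  0 <= a < 1 -> 0 <= l ->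
  measurable_fun torus u -> measurable_fun torus v ->
  (L2sq u v < +oo)%E ->
  (forall x, torus x -> ~ torus_arc a l x -> u x = 0 /\ v x = 0) ->
  (L2norm (Estar N u) (Estar N v)
     <= sqrte (lebesgue_measure (torus_arc a l) + (2 / N%:R)%:E) * L2norm u v)%E.
Proof.
(* neither the position of the arc nor the finiteness of [L2sq u v] matters *)
move=> N_gt0 _ l0 mu mv _ supp.
set K := Num.min l 1 + 2 / N%:R.
have K_ge0 : 0 <= K by rewrite addr_ge0 ?divr_ge0 ?ler0n // le_min l0 ler01.
pose F y := u y ^+ 2 + v y ^+ 2.
have F_ge0 y : 0 <= F y by rewrite addr_ge0 ?sqr_ge0.
have mF : measurable_fun torus F by apply: measurable_funD; exact: measurable_funX.
have pointwise x : Estar N u x ^+ 2 + Estar N v x ^+ 2 <= K * Estar N F x.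
  rewrite EstarD; set E2 := Estar N (fun y => u y ^+ 2) x + _.
  apply: le_trans (_ : _ <= (Num.min l 1 + N%:R^-1) * E2) _.
    by rewrite mulrDr; apply: lerD; apply: sqr_Estar_le => // y ty /(supp y ty) [].
  rewrite ler_wpM2r ?addr_ge0 ?Estar_ge0 // => [y _|y _|]; rewrite ?sqr_ge0 //.
  by rewrite lerD2l ler_pdivlMr ?ltr0n // mulrC mulfV ?pnatr_eq0 -?lt0n // ler1n.
rewrite lebesgue_measure_torus_arc // -EFinD /L2norm -sqrteM ?lee_fin // lee_sqrt; last first.
  by rewrite mule_ge0 ?lee_fin // integral_ge0 // => x _; rewrite lee_fin F_ge0.
rewrite /L2sq -(ge0_integral_Estar N_gt0 F mF) // -ge0_integralZl ?lee_fin //; first last.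
- by move=> x _; rewrite lee_fin Estar_ge0.
- by apply/measurable_EFinP; exact: measurable_fun_Estar.
- exact: measurable_itv.
apply: ge0_le_integral => //.
- exact: measurable_itv.
- by move=> x _; rewrite lee_fin addr_ge0 ?sqr_ge0.
- by apply/measurable_EFinP; apply: measurable_funD; apply: measurable_funX;
    exact: measurable_fun_Estar.
- by apply/measurable_EFinP; apply: measurable_funM => //; exact: measurable_fun_Estar.
- by move=> x _; rewrite lee_fin pointwise.
Qed.
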